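(* For every integer $n\ge 1$, the restriction to $\mathfrak{sp}(2n)$ of the functional $$F_n=\sum_{i=1}^{n}\sum_{j=1}^{n+1-i}e_{i,j}^*$$ is regular on $C_n=\mathfrak{sp}(2n)$, i.e. the kernel of its Kirillov form on $\mathfrak{sp}(2n)$ has dimension $n$.
   Context: Over $\mathbb{C}$. $e_{i,j}^*(X)=X_{i,j}$. For an $n\times n$ matrix $M$, let $M^{\hat t}$ denote its transpose across the antidiagonal, $(M^{\hat t})_{i,j}=M_{n+1-j,n+1-i}$. Here $\mathfrak{sp}(2n)$ denotes the Lie algebra of $2n\times 2n$ matrices of the block form $\begin{pmatrix}A&B\\ C&-A^{\hat t}\end{pmatrix}$ with $A,B,C$ arbitrary $n\times n$ matrices subject to $B^{\hat t}=B$, $C^{\hat t}=C$ (equivalently, spanned by $e_{i,j}-e_{2n+1-j,2n+1-i}$ for $1\le i,j\le n$, and $e_{i,j}+e_{2n+1-j,2n+1-i}$ for $i\le n<j$ or $j\le n<i$). For $f\in\mathfrak{g}^*$, $B_f(x,y)=f([x,y])$, $\ker(B_f)=\{x\in\mathfrak{g}: f([x,y])=0\ \forall y\in\mathfrak{g}\}$, and $f$ is regular if $\dim\ker(B_f)=\operatorname{ind}\mathfrak{g}:=\min_{g\in\mathfrak{g}^*}\dim\ker(B_g)$. It is known that $\operatorname{ind}\mathfrak{sp}(2n)=n$. *)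

From HB Require Import structures.
From mathcomp Require Import all_boot all_order all_algebra.
From mathcomp Require Import complex.
From mathcomp Require Import Rstruct.
From Stdlib Require Rdefinitions.
Set Implicit Arguments. Unset Strict Implicit. Unset Printing Implicit Defensive.
Import Order.TTheory GRing.Theory Num.Theory.
Local Open Scope ring_scope.

Notation CC := (complex Rdefinitions.R).

(* Transpose across the antidiagonal: (M^t^)_{i,j} = M_{n+1-j, n+1-i}. *)
Definition antitr (F : Type) (n : nat) (M : 'M[F]_n) : 'M[F]_n :=
  \matrix_(i < n, j < n) M (rev_ord j) (rev_ord i).

(* sp(2n): 2n x 2n matrices (indices 'I_(n+n)) of block form
   [[A, B], [C, -A^t^]] with B^t^ = B and C^t^ = C. *)
Definition is_sp (n : nat) (M : 'M[CC]_(n + n)) : Prop :=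
  drsubmx M = - antitr (ulsubmx M) /\
  antitr (ursubmx M) = ursubmx M /\
  antitr (dlsubmx M) = dlsubmx M.

Definition lie_br (m : nat) (X Y : 'M[CC]_m) : 'M[CC]_m := X *m Y - Y *m X.

(* F_n = sum_{i=1}^n sum_{j=1}^{n+1-i} e*_{i,j}; with 0-based indices this is
   the sum of X i j over i + j < n. *)
Definition Fn (n : nat) (X : 'M[CC]_(n + n)) : CC :=
  \sum_(i < n + n) \sum_(j < n + n | (nat_of_ord i + nat_of_ord j < n)%N) X i j.

Definition in_kirillov_kernel (n : nat) (f : 'M[CC]_(n + n) -> CC)
    (x : 'M[CC]_(n + n)) : Prop :=
  is_sp x /\ forall y, is_sp y -> f (lie_br x y) = 0.

(* Write x in sp(2n) as [[P, Q], [R, -P^t]] (t = antitranspose) and let A be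
   the n x n matrix with A_ij = [i + j < n] (0-based), so that F_n(Z) =
   tr(A Z_ul).  For y = [[a, b], [c, -a^t]] one computes
     F_n([x, y]) = tr((AP - PA) a) + tr(AQc) - tr(RAb),
   and since a is arbitrary and b, c range over antitranspose-symmetric
   matrices, x lies in the kernel iff AP = PA and Q = R = 0 (QJ and JR then
   anticommute with A, J being the antidiagonal identity).
   A is invertible, with inverse M = (antidiagonal) - (shifted antidiagonal).
   Commuting with M^2 is a three-term recurrence between consecutive rows, so
   a matrix commuting with A is determined by its first row, and the powers
   M^(2k), k < n, whose first rows are triangular, realise every first row.
   Hence the kernel maps isomorphically onto row vectors of length n. *)

From HB Require Import structures.
From mathcomp Require Import all_boot all_order all_algebra.
From mathcomp Require Import complex Rstruct.
From mathcomp Require Import zify ring.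
Set Implicit Arguments. Unset Strict Implicit. Unset Printing Implicit Defensive.
Import Order.TTheory GRing.Theory Num.Theory.
Local Open Scope ring_scope.

Section Entries.
Variable N : nat.
Implicit Types X Y : 'M[CC]_N.

(* Entry (a, b) of X for natural indices, 0 outside the matrix; this lets
   us speak of the neighbouring entries a.+1, a.-1 without bound checks. *)
Definition ent X (a b : nat) : CC :=
  if insub a is Some i then (if insub b is Some j then X i j else 0) else 0.

Lemma entE X (i j : 'I_N) : ent X i j = X i j.
Proof. by rewrite /ent !valK. Qed.

Lemma ent_outl X a b : (N <= a)%N -> ent X a b = 0.
Proof. by move=> h; rewrite /ent insubN // -leqNgt. Qed.

Lemma ent_outr X a b : (N <= b)%N -> ent X a b = 0.
Proof. by move=> h; rewrite /ent; case: insub => // i; rewrite insubN // -leqNgt. Qed.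

Lemma ent0 a b : ent 0 a b = 0.
Proof.
by rewrite /ent; case: (insub a) => [i|] //; case: (insub b) => [j|] //; rewrite mxE.
Qed.

Lemma entD X Y a b : ent (X + Y) a b = ent X a b + ent Y a b.
Proof.
rewrite /ent; case: (insub a) => [i|]; last by rewrite addr0.
by case: (insub b) => [j|]; rewrite ?mxE ?addr0.
Qed.

Lemma entZ c X a b : ent (c *: X) a b = c * ent X a b.
Proof.
rewrite /ent; case: (insub a) => [i|]; last by rewrite mulr0.
by case: (insub b) => [j|]; rewrite ?mxE ?mulr0.
Qed.

Lemma ent_ext X Y :
  (forall a b, (a < N)%N -> (b < N)%N -> ent X a b = ent Y a b) -> X = Y.
Proof. by move=> h; apply/matrixP => i j; rewrite -!entE h. Qed.

Lemma sum_indicator (F : 'I_N -> CC) (c : nat) :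
  \sum_(k < N) ((k : nat) == c)%:R * F k = if insub c is Some i then F i else 0.
Proof.
case: insubP => [i _ <-|hc].
  rewrite (bigD1 i) //= eqxx mul1r big1 ?addr0 // => k /negbTE.
  by rewrite -(inj_eq val_inj) => ->; rewrite mul0r.
rewrite big1 // => k _; case: eqP => [ek|]; last by rewrite mul0r.
by move: hc; rewrite -ek ltn_ord.
Qed.

Lemma sum_indicator_col X (c : nat) (j : 'I_N) :
  \sum_(k < N) ((k : nat) == c)%:R * X k j = ent X c j.
Proof. by rewrite sum_indicator /ent valK; case: insub. Qed.

Lemma sum_indicator_row X (c : nat) (i : 'I_N) :
  \sum_(k < N) ((k : nat) == c)%:R * X i k = ent X i c.
Proof. by rewrite sum_indicator /ent valK. Qed.

End Entries.

Section InverseOfA.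
Variable N : nat.
Implicit Types X Y : 'M[CC]_N.

(* A represents F_n on the upper-left block: A_ij = [i + j < N].  Its inverse
   is M, with M_ij = [i + j = N - 1] - [i + j = N]. *)
Definition Amx : 'M[CC]_N := \matrix_(i, j) ((i + j < N)%N)%:R.
Definition Mmx : 'M[CC]_N :=
  \matrix_(i, j) (((i + j == N.-1)%N)%:R - ((i + j == N)%N)%:R).

Lemma ent_Amx a b :
  ent Amx a b = if (a < N)%N && (b < N)%N then ((a + b < N)%N)%:R else 0.
Proof.
case: (ltnP a N) => ha; last by rewrite !ent_outl.
case: (ltnP b N) => hb; last by rewrite !ent_outr.
by rewrite -[a]/(val (Ordinal ha)) -[b]/(val (Ordinal hb)) entE mxE.
Qed.

Lemma ent_Mmx_mull Y a b : ent (Mmx *m Y) a b =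
  if (a < N)%N then ent Y (N.-1 - a) b - ent Y (N - a) b else 0.
Proof.
case: (ltnP a N) => ha; last by rewrite !ent_outl ?subr0.
case: (ltnP b N) => hb; last by rewrite !ent_outr ?subr0.
rewrite -[a]/(val (Ordinal ha)) -[b]/(val (Ordinal hb)) entE mxE.
under eq_bigr do rewrite mxE mulrBl.
rewrite sumrB /=.
have e1 k : (a + k == N.-1)%N = (k == N.-1 - a)%N by apply/eqP/eqP; lia.
have e2 k : (a + k == N)%N = (k == N - a)%N by apply/eqP/eqP; lia.
under eq_bigr do rewrite e1.
under [X in _ - X]eq_bigr do rewrite e2.
by rewrite !sum_indicator_col.
Qed.

Lemma ent_Mmx_mulr Y a b : ent (Y *m Mmx) a b =
  if (b < N)%N then ent Y a (N.-1 - b) - ent Y a (N - b) else 0.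
Proof.
case: (ltnP b N) => hb; last by rewrite !ent_outr ?subr0.
case: (ltnP a N) => ha; last by rewrite !ent_outl ?subr0.
rewrite -[a]/(val (Ordinal ha)) -[b]/(val (Ordinal hb)) entE mxE.
under eq_bigr do rewrite mxE mulrBr mulrC [_ * (_ == N)%:R]mulrC.
rewrite sumrB /=.
have e1 k : (k + b == N.-1)%N = (k == N.-1 - b)%N by apply/eqP/eqP; lia.
have e2 k : (k + b == N)%N = (k == N - b)%N by apply/eqP/eqP; lia.
under eq_bigr do rewrite e1.
under [X in _ - X]eq_bigr do rewrite e2.
by rewrite !sum_indicator_row.
Qed.

Lemma Amx_Mmx : Amx *m Mmx = 1%:M.
Proof.
apply: ent_ext => a b ha hb.
rewrite ent_Mmx_mulr hb !ent_Amx ha.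
rewrite -[a]/(val (Ordinal ha)) -[b]/(val (Ordinal hb)) entE mxE /=.
rewrite -(inj_eq val_inj) /=.
have -> : (N.-1 - b < N)%N by lia.
have -> : (a + (N.-1 - b) < N)%N = (a <= b)%N by apply/idP/idP; lia.
case: (ltnP (N - b) N) => h2 /=.
  have -> : (a + (N - b) < N)%N = (a < b)%N by apply/idP/idP; lia.
  by case: (ltngtP a b) => h; rewrite ?subrr ?subr0.
have -> : b = 0%N by lia.
by rewrite subr0 leqn0.
Qed.

Lemma Mmx_Amx : Mmx *m Amx = 1%:M.
Proof. exact: mulmx1C Amx_Mmx. Qed.

End InverseOfA.

Section CentralizerOfA.
Variable N : nat.
Implicit Types X P Z : 'M[CC]_N.
Local Notation A := (@Amx N).
Local Notation M := (@Mmx N).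

Lemma ent_M2_mull X a b : (a < N)%N -> ent (M *m (M *m X)) a b =
  ent X a b - ent X a.+1 b - (if (0 < a)%N then ent X a.-1 b - ent X a b else 0).
Proof.
move=> ha; rewrite ent_Mmx_mull ha ent_Mmx_mull.
have -> : (N.-1 - a < N)%N by lia.
have -> : (N.-1 - (N.-1 - a) = a)%N by lia.
have -> : (N - (N.-1 - a) = a.+1)%N by lia.
rewrite ent_Mmx_mull.
case: (posnP a) => a0; first by rewrite a0 subn0 ltnn subr0.
have -> : (N - a < N)%N by lia.
have -> : (N.-1 - (N - a) = a.-1)%N by lia.
by have -> : (N - (N - a) = a)%N by lia.
Qed.

Lemma ent_M2_mulr X a b : (b < N)%N -> ent (X *m M *m M) a b =
  ent X a b - ent X a b.+1 - (if (0 < b)%N then ent X a b.-1 - ent X a b else 0).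
Proof.
move=> hb; rewrite ent_Mmx_mulr hb ent_Mmx_mulr.
have -> : (N.-1 - b < N)%N by lia.
have -> : (N.-1 - (N.-1 - b) = b)%N by lia.
have -> : (N - (N.-1 - b) = b.+1)%N by lia.
rewrite ent_Mmx_mulr.
case: (posnP b) => b0; first by rewrite b0 subn0 ltnn subr0.
have -> : (N - b < N)%N by lia.
have -> : (N.-1 - (N - b) = b.-1)%N by lia.
by have -> : (N - (N - b) = b)%N by lia.
Qed.

(* A matrix commuting with M^2 whose first row vanishes is zero: equating
   M^2 X and X M^2 at (a, b) determines row a.+1 from rows a and a.-1. *)
Lemma commM2_row0_eq0 X :
  M *m (M *m X) = X *m M *m M -> (forall b, ent X 0 b = 0) -> X = 0.
Proof.
move=> HT H0.
have next_row a : (forall b, ent X a b = 0) -> (forall b, ent X a.-1 b = 0) ->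
    forall b, ent X a.+1 b = 0.
  move=> Ha Hb b.
  case: (ltnP a N) => ha; last by rewrite ent_outl //; lia.
  case: (ltnP b N) => hb; last by rewrite ent_outr.
  have := congr1 (fun Z => ent Z a b) HT => /=.
  rewrite ent_M2_mull // ent_M2_mulr // !Ha Hb.
  case: (0 < a)%N; case: (0 < b)%N; rewrite !subrr ?subr0 ?sub0r => /eqP;
    by rewrite ?oppr_eq0 => /eqP.
have rows_eq0 a : (forall b, ent X a b = 0) /\ (forall b, ent X a.+1 b = 0).
  by elim: a => [|a [IH1 IH2]]; split => //; apply: next_row.
apply: ent_ext => a b _ _; rewrite ent0; exact: (rows_eq0 a).1.
Qed.

Lemma commA_commM P : A *m P = P *m A -> M *m P = P *m M.
Proof.
move=> H.
by rewrite -[LHS]mulmx1 -Amx_Mmx mulmxA -(mulmxA M P A) -H mulmxA Mmx_Amx mul1mx.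
Qed.

Lemma commA_commM2 P : A *m P = P *m A -> M *m (M *m P) = P *m M *m M.
Proof. by move=> /commA_commM H; rewrite H mulmxA H. Qed.

Fixpoint M2pow (k : nat) : 'M[CC]_N :=
  if k is k'.+1 then M2pow k' *m M *m M else 1%:M.

Lemma commA_M2pow k : A *m M2pow k = M2pow k *m A.
Proof.
elim: k => [|k IH] /=; first by rewrite mulmx1 mul1mx.
rewrite !mulmxA IH -!mulmxA; congr (_ *m _).
by rewrite mulmxA Amx_Mmx mul1mx Mmx_Amx mulmx1.
Qed.

Lemma M2pow_row0 k : (forall j, (k < j)%N -> ent (M2pow k) 0 j = 0) /\
                     ((k < N)%N -> ent (M2pow k) 0 k = (-1) ^+ k).
Proof.
have ent1 a b : ent (1%:M : 'M[CC]_N) a b =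
    if (a < N)%N && (b < N)%N then (a == b)%:R else 0.
  case: (ltnP a N) => ha; last by rewrite !ent_outl.
  case: (ltnP b N) => hb; last by rewrite !ent_outr.
  by rewrite -[a]/(val (Ordinal ha)) -[b]/(val (Ordinal hb)) entE mxE.
elim: k => [|k [IH1 IH2]] /=.
  split; first by move=> j j0; rewrite ent1; case: ifP => //; case: j j0.
  by move=> h; rewrite ent1 h.
split.
  move=> j hj; case: (ltnP j N) => hjN; last by rewrite ent_outr.
  rewrite ent_M2_mulr // !IH1 //; try lia.
  by case: ifP => _; rewrite ?subrr ?IH1 ?subr0 //; lia.
move=> hk; rewrite ent_M2_mulr // IH1 // IH1 // IH2; last by lia.
by rewrite ltn0Sn !subr0 sub0r exprS mulN1r.
Qed.

(* Every first row is realised by a matrix commuting with A: subtract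
   multiples of M^(2k) to clear the entries k = N-1, ..., 0 in turn. *)
Lemma commA_with_row0 (f : nat -> CC) :
  exists P, A *m P = P *m A /\ forall j, (j < N)%N -> ent P 0 j = f j.
Proof.
suff H k : (k <= N)%N -> forall g : nat -> CC, (forall j, (k <= j)%N -> g j = 0) ->
    exists P, A *m P = P *m A /\ forall j, (j < N)%N -> ent P 0 j = g j.
  have [|P [h1 h2]] := H N (leqnn N) (fun j => if (j < N)%N then f j else 0).
    by move=> j hj; rewrite ltnNge hj.
  by exists P; split => // j hj; rewrite h2 hj.
elim: k => [|k IH] hk g hg.
  by exists 0; split; [rewrite mulmx0 mul0mx | move=> j _; rewrite ent0 hg].
pose c := g k * (-1) ^+ k.
have [|P [h1 h2]] := IH (ltnW hk) (fun j => g j - c * ent (M2pow k) 0 j).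
  move=> j hj; case: (ltngtP k j) => hkj.
  - by rewrite hg // (M2pow_row0 k).1 // mulr0 subr0.
  - lia.
  - rewrite -hkj (M2pow_row0 k).2 // /c -mulrA -exprMn mulrNN mulr1 expr1n mulr1.
    by rewrite subrr.
exists (P + c *: M2pow k); split.
  by rewrite mulmxDr mulmxDl h1 -scalemxAl -scalemxAr commA_M2pow.
by move=> j hj; rewrite entD entZ h2 // subrK.
Qed.

(* Only 0 anticommutes with A: such a Z commutes with M^2, so it equals the
   matrix commuting with A having its first row; then MZ = -ZM = -MZ. *)
Lemma anticommA_eq0 Z : A *m Z + Z *m A = 0 -> Z = 0.
Proof.
move=> H.
have HA : A *m Z = - (Z *m A) by apply/eqP; rewrite -subr_eq0 opprK H.
have MZ : Z *m M = - (M *m Z).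
  have <- : M *m (A *m Z) *m M = Z *m M by rewrite mulmxA Mmx_Amx mul1mx.
  by rewrite HA mulmxN mulNmx -mulmxA -mulmxA Amx_Mmx mulmx1.
have TZ : M *m (M *m Z) = Z *m M *m M.
  by rewrite MZ mulNmx -mulmxA MZ mulmxN opprK.
have [P [hP1 hP2]] := commA_with_row0 (fun j => ent Z 0 j).
have ZP : Z = P.
  apply/eqP; rewrite -subr_eq0; apply/eqP; apply: commM2_row0_eq0.
    by rewrite !mulmxBr !mulmxBl TZ commA_commM2.
  move=> b; rewrite entD; case: (ltnP b N) => hb; last by rewrite !ent_outr // addr0.
  by rewrite -scaleN1r entZ hP2 // mulN1r subrr.
have MZ2 : M *m Z = 0.
  move: MZ; rewrite {1}ZP -commA_commM // -ZP => /eqP; rewrite -subr_eq0 opprK => /eqP.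
  rewrite -mulr2n => /eqP; rewrite -scaler_nat scaler_eq0 pnatr_eq0 /= => /eqP //.
by rewrite -[Z]mul1mx -Amx_Mmx -mulmxA MZ2 mulmx0.
Qed.

End CentralizerOfA.

Fact antitr_linear N : linear (@antitr CC N).
Proof. by move=> c X Y; apply/matrixP => i j; rewrite !mxE. Qed.

HB.instance Definition _ N := GRing.isLinear.Build CC 'M[CC]_N 'M[CC]_N _
  (@antitr CC N) (@antitr_linear N).

Section Antitranspose.
Variable N : nat.
Implicit Types X Y W V : 'M[CC]_N.
Local Notation A := (@Amx N).

Lemma antitrK X : antitr (antitr X) = X.
Proof. by apply/matrixP => i j; rewrite !mxE !rev_ordK. Qed.

Lemma antitr_mul X Y : antitr (X *m Y) = antitr Y *m antitr X.
Proof.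
apply/matrixP => i j; rewrite !mxE (reindex_inj rev_ord_inj) /=.
by apply: eq_bigr => k _; rewrite !mxE ?rev_ordK mulrC.
Qed.

Lemma mxtrace_antitr X : \tr (antitr X) = \tr X.
Proof.
rewrite /mxtrace (reindex_inj rev_ord_inj) /=.
by apply: eq_bigr => k _; rewrite !mxE ?rev_ordK.
Qed.

Lemma tr_antitr_mul W V : \tr (W *m antitr V) = \tr (antitr W *m V).
Proof. by rewrite -[LHS]mxtrace_antitr antitr_mul antitrK mxtrace_mulC. Qed.

Lemma tr_mul_delta W (i j : 'I_N) : \tr (W *m delta_mx j i) = W i j.
Proof.
rewrite /mxtrace (bigD1 i) //= big1 ?addr0.
  rewrite mxE (bigD1 j) //= big1 ?addr0; first by rewrite mxE !eqxx mulr1.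
  by move=> k /negbTE kj; rewrite mxE kj mulr0.
by move=> k /negbTE ki; rewrite mxE big1 // => l _; rewrite mxE ki andbF mulr0.
Qed.

Lemma tr_pairing_eq0 W : (forall V, \tr (W *m V) = 0) -> W = 0.
Proof. by move=> h; apply/matrixP => i j; rewrite -tr_mul_delta h mxE. Qed.

Lemma tr_pairing_sym_eq0 W :
  (forall V, antitr V = V -> \tr (W *m V) = 0) -> W + antitr W = 0.
Proof.
move=> h; apply/matrixP => i j.
have := h (delta_mx j i + antitr (delta_mx j i)).
rewrite [antitr (_ + _)]raddfD /= antitrK addrC => /(_ erefl).
by rewrite mulmxDr mxtraceD tr_antitr_mul !tr_mul_delta !mxE.
Qed.

Definition Jmx : 'M[CC]_N := \matrix_(i, j) ((i + j == N.-1)%N)%:R.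

Lemma Jmx_mull X i j : (Jmx *m X) i j = X (rev_ord i) j.
Proof.
rewrite mxE.
have e k : (i + k == N.-1)%N = (k == N.-1 - i)%N.
  by apply/eqP/eqP; have := ltn_ord i; lia.
under eq_bigr do rewrite mxE e.
rewrite sum_indicator_col.
have -> : (N.-1 - i = N - i.+1)%N by have := ltn_ord i; lia.
exact: (entE X (rev_ord i) j).
Qed.

Lemma Jmx_mulr X i j : (X *m Jmx) i j = X i (rev_ord j).
Proof.
rewrite mxE.
have e k : (k + j == N.-1)%N = (k == N.-1 - j)%N.
  by apply/eqP/eqP; have := ltn_ord j; lia.
under eq_bigr do rewrite mxE e mulrC.
rewrite sum_indicator_row.
have -> : (N.-1 - j = N - j.+1)%N by have := ltn_ord j; lia.
exact: (entE X i (rev_ord j)).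
Qed.

Lemma Jmx_invol : Jmx *m Jmx = 1%:M.
Proof.
apply/matrixP => i j; rewrite Jmx_mull !mxE /=.
congr (_%:R); rewrite -(inj_eq val_inj) /=.
by apply/eqP/eqP; have := ltn_ord i; have := ltn_ord j; lia.
Qed.

Lemma Jmx_antitrA : Jmx *m antitr A = A *m Jmx.
Proof. by apply/matrixP => i j; rewrite Jmx_mull Jmx_mulr !mxE rev_ordK addnC. Qed.

Lemma antitrA_Jmx : antitr A *m Jmx = Jmx *m A.
Proof. by apply/matrixP => i j; rewrite Jmx_mull Jmx_mulr !mxE rev_ordK addnC. Qed.

(* An antitranspose-symmetric Q with AQ antitranspose-antisymmetric is 0,
   because QJ anticommutes with A; symmetrically for RA. *)
Lemma sym_Amul_eq0 Q : antitr Q = Q -> A *m Q + antitr (A *m Q) = 0 -> Q = 0.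
Proof.
rewrite antitr_mul => -> HQ.
have QJ0 : Q *m Jmx = 0.
  apply: anticommA_eq0.
  by rewrite mulmxA -(mulmxA Q Jmx) -antitrA_Jmx mulmxA -mulmxDl HQ mul0mx.
by rewrite -[Q]mulmx1 -Jmx_invol mulmxA QJ0 mul0mx.
Qed.

Lemma sym_mulA_eq0 R : antitr R = R -> R *m A + antitr (R *m A) = 0 -> R = 0.
Proof.
rewrite antitr_mul => -> HR.
have JR0 : Jmx *m R = 0.
  apply: anticommA_eq0.
  by rewrite mulmxA -Jmx_antitrA -!mulmxA -mulmxDr addrC HR mulmx0.
by rewrite -[R]mul1mx -Jmx_invol -mulmxA JR0 mulmx0.
Qed.

End Antitranspose.

Section KirillovForm.
Variable N : nat.
Local Notation A := (@Amx N).

Lemma Fn_trace (Z : 'M[CC]_(N + N)) : Fn Z = \tr (A *m ulsubmx Z).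
Proof.
rewrite /Fn /mxtrace.
under eq_bigr do rewrite big_mkcond /=.
rewrite big_split_ord /= [X in _ + X]big1 ?addr0; last first.
  move=> i _; rewrite big1 // => j _.
  by rewrite ifF //=; apply/negbTE; rewrite -leqNgt; lia.
transitivity (\sum_(i < N) \sum_(j < N)
   (if (i + j < N)%N then Z (lshift N i) (lshift N j) else 0)).
  apply: eq_bigr => i _; rewrite big_split_ord /= [X in _ + X]big1 ?addr0 //.
  by move=> j _; rewrite ifF //=; apply/negbTE; rewrite -leqNgt; lia.
rewrite exchange_big; apply: eq_bigr => i _; rewrite mxE; apply: eq_bigr => j _.
rewrite !mxE /= addnC.
by case: ifP; rewrite ?mul1r ?mul0r.
Qed.

Lemma Fn_lie_block (P Q R S a b c d : 'M[CC]_N) :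
  Fn (lie_br (block_mx P Q R S) (block_mx a b c d)) =
  \tr ((A *m P - P *m A) *m a) + \tr (A *m Q *m c) - \tr (R *m A *m b).
Proof.
rewrite Fn_trace /lie_br !mulmx_block opp_block_mx add_block_mx block_mxKul.
rewrite !mulmxDr mulmxN !mulmxDr !raddfB /= !mxtraceD mulmxBl raddfB /=.
have e1 : \tr (A *m (a *m P)) = \tr (P *m A *m a).
  by rewrite mulmxA mxtrace_mulC mulmxA.
have e2 : \tr (A *m (b *m R)) = \tr (R *m A *m b).
  by rewrite mulmxA mxtrace_mulC mulmxA.
rewrite e1 e2 !mulmxA.
ring.
Qed.

Lemma kirillov_kernelP (x : 'M[CC]_(N + N)) : in_kirillov_kernel (@Fn N) x <->
  [/\ drsubmx x = - antitr (ulsubmx x), ursubmx x = 0, dlsubmx x = 0 &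
      A *m ulsubmx x = ulsubmx x *m A].
Proof.
split; last first.
  case=> hS hQ hR hA; split; first by rewrite /is_sp hS hQ hR raddf0.
  move=> y _; rewrite -{1}(submxK x) -(submxK y) Fn_lie_block hQ hR hA subrr.
  by rewrite !(mul0mx, mulmx0, mxtrace0) subr0 addr0.
case=> [[hS [hQ hR]] H].
have hF (a b c : 'M[CC]_N) : antitr b = b -> antitr c = c ->
    \tr ((A *m ulsubmx x - ulsubmx x *m A) *m a) + \tr (A *m ursubmx x *m c)
      - \tr (dlsubmx x *m A *m b) = 0.
  move=> hb hc; have := H (block_mx a b c (- antitr a)).
  rewrite -{1}(submxK x) Fn_lie_block; apply.
  by rewrite /is_sp block_mxKdr block_mxKul block_mxKur block_mxKdl.
have antitr0 : antitr (0 : 'M[CC]_N) = 0 by rewrite raddf0.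
split => //.
- apply: sym_Amul_eq0 => //; apply: tr_pairing_sym_eq0 => c hc.
  by have := hF 0 0 c antitr0 hc; rewrite !mulmx0 mxtrace0 add0r subr0.
- apply: sym_mulA_eq0 => //; apply: tr_pairing_sym_eq0 => b hb.
  have := hF 0 b 0 hb antitr0; rewrite !mulmx0 mxtrace0 add0r sub0r.
  by move/eqP; rewrite oppr_eq0 => /eqP.
- apply/eqP; rewrite -subr_eq0; apply/eqP; apply: tr_pairing_eq0 => a.
  by have := hF a 0 0 antitr0 antitr0; rewrite !mulmx0 mxtrace0 subr0 addr0.
Qed.

End KirillovForm.

Definition kernel_map N (x : 'M[CC]_(N + N)) : 'M[CC]_(N + N) :=
  block_mx (Amx N *m ulsubmx x - ulsubmx x *m Amx N) (ursubmx x) (dlsubmx x)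
           (drsubmx x + antitr (ulsubmx x)).

Fact kernel_map_linear N : linear (@kernel_map N).
Proof.
move=> c u v; rewrite /kernel_map /ulsubmx /ursubmx /dlsubmx /drsubmx !linearP /=.
rewrite scale_block_mx add_block_mx; congr block_mx.
- by rewrite mulmxDl -scalemxAl scalerBr opprD addrACA.
- by rewrite scalerDr addrACA.
Qed.

HB.instance Definition _ N := GRing.isLinear.Build CC 'M[CC]_(N + N) 'M[CC]_(N + N) _
  (@kernel_map N) (@kernel_map_linear N).

Lemma kernel_map_eq0 N (x : 'M[CC]_(N + N)) :
  kernel_map x = 0 <-> in_kirillov_kernel (@Fn N) x.
Proof.
rewrite kirillov_kernelP; split.
  move/eqP; rewrite /kernel_map block_mx_eq0 => /and4P [/eqP h1 /eqP h2 /eqP h3 /eqP h4].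
  split => //; first by apply/eqP; rewrite -addr_eq0 h4.
  by apply/eqP; rewrite -subr_eq0 h1.
case=> h1 h2 h3 h4; apply/eqP.
by rewrite /kernel_map block_mx_eq0 h1 h2 h3 h4 subrr addNr !eqxx.
Qed.

Definition ul_row N (i0 : 'I_N) (x : 'M[CC]_(N + N)) : 'rV[CC]_N :=
  row i0 (ulsubmx x).

Fact ul_row_linear N i0 : linear (@ul_row N i0).
Proof. by move=> c u v; rewrite /ul_row /ulsubmx !linearP. Qed.

HB.instance Definition _ N i0 := GRing.isLinear.Build CC 'M[CC]_(N + N) 'rV[CC]_N _
  (@ul_row N i0) (@ul_row_linear N i0).

Section KernelDimension.
Variables (n : nat) (n_gt0 : (0 < n)%N).
Local Notation i0 := (Ordinal n_gt0).
Local Notation K := (lker (linfun (@kernel_map n))).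
Local Notation row0 := (linfun (@ul_row n i0)).

Lemma kernel_row0_inj : (K :&: lker row0 = 0)%VS.
Proof.
apply/eqP; rewrite -subv0; apply/subvP => x; rewrite memv_cap !memv_ker !lfunE /=.
case/andP => /eqP /kernel_map_eq0 /kirillov_kernelP [hS hQ hR hA] /eqP hrow.
have hP : ulsubmx x = 0.
  apply: commM2_row0_eq0; first exact: commA_commM2.
  move=> b; case: (ltnP b n) => hb; last by rewrite ent_outr.
  rewrite (entE (ulsubmx x) i0 (Ordinal hb)).
  by move/matrixP: hrow => /(_ 0 (Ordinal hb)); rewrite !mxE.
by rewrite memv0 -(submxK x) hS hQ hR hP raddf0 oppr0 block_mx0.
Qed.

Lemma kernel_row0_onto : (row0 @: K)%VS = fullv.
Proof.
apply/eqP; rewrite eqEsubv subvf /=; apply/subvP => v _.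
have [P [hPA hProw]] := commA_with_row0 n
  (fun j => if (insub j : option 'I_n) is Some jj then v ord0 jj else 0).
apply/memv_imgP; exists (block_mx P 0 0 (- antitr P)).
  rewrite memv_ker lfunE /=; apply/eqP/kernel_map_eq0/kirillov_kernelP.
  by rewrite block_mxKul block_mxKur block_mxKdl block_mxKdr.
rewrite lfunE /= /ul_row block_mxKul; apply/matrixP => i j.
rewrite (ord1 i) !mxE.
by have := hProw j (ltn_ord j); rewrite (entE P i0 j) valK => ->.
Qed.

End KernelDimension.

Unset Implicit Arguments.

Theorem theorem4p9 (n : nat) : (1 <= n)%N ->
  exists K : {vspace 'M[CC]_(n + n)},
    (forall x : 'M[CC]_(n + n), x \in K <-> in_kirillov_kernel (@Fn n) x) /\
    \dim K = n.
Proof.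
move=> n_gt0; exists (lker (linfun (@kernel_map n))); split.
  by move=> x; rewrite memv_ker lfunE -kernel_map_eq0; split => /eqP.
rewrite -(limg_dim_eq (kernel_row0_inj n_gt0)) kernel_row0_onto.
by rewrite dimvf /dim /= mul1n.
Qed.
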